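(* Suppose each vertex $v_i$ of $P$ initially knows the value of $X[i,\ge j]$ for all $j>i$. Then there exists an $O(\zeta)$-round deterministic $\mathsf{CONGEST}$ algorithm that lets each vertex $v_i$ of $P$ compute $X[\le i,\ge i+1]$.
   Context: $G=(V,E)$ is an unweighted directed graph with $n=|V|$, also the communication network. $\mathsf{CONGEST}$: synchronous rounds, each vertex may send an $O(\log n)$-bit message to each neighbour per round, unique identifiers, unlimited local computation. $P=(s=v_0,\dots,v_{h_{st}}=t)$ is a given shortest $s$-$t$ path whose vertices know their indices, and $\zeta\ge1$ is a threshold. For $i<j$, $X[i,j]$ is the shortest length of an $s$-$t$ path consisting of the subpath of $P$ from $s$ to $v_i$, then a detour path from $v_i$ to $v_j$ with at most $\zeta$ edges sharing no edge with $P$, then the subpath of $P$ from $v_j$ to $t$ ($\infty$ if none exists). Further $X[i,\ge j]=\min_{j'\ge j}X[i,j']$ and $X[\le i,\ge j]=\min_{i'\le i}\min_{j'\ge j}X[i',j']$ (minimum over an empty set is $\infty$). *)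

From mathcomp Require Import all_boot.
Set Implicit Arguments. Unset Strict Implicit. Unset Printing Implicit Defensive.

(* G u v).  The given shortest s-t path P is (s :: ps), i.e.                 *)
(* v_0 = s, v_k = nth s (s :: ps) k, h_st = size ps, t = last s ps.          *)
Section Paths.
Variables (n : nat) (G : rel 'I_n) (s : 'I_n) (ps : seq 'I_n) (zeta : nat).

Definition hst : nat := size ps.
Definition vP (k : nat) : 'I_n := nth s (s :: ps) k.
Definition tP : 'I_n := last s ps.

Definition is_walk (x : 'I_n) (q : seq 'I_n) (y : 'I_n) : bool :=
  path G x q && (last x q == y).

Definition shortest_path : Prop :=
  is_walk s ps tP /\ forall q, is_walk s q tP -> size ps <= size q.

Definition Pedge (a b : 'I_n) : bool :=
  has (fun k => (a == vP k) && (b == vP k.+1)) (iota 0 hst).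

Definition detour (i j : nat) (q : seq 'I_n) : bool :=
  [&& is_walk (vP i) q (vP j), size q <= zeta
    & all (fun e => ~~ Pedge e.1 e.2) (zip (vP i :: q) q)].

(* L is the length of an s-t path  P[s,v_i] . detour . P[v_j,t]  *)
Definition Xval (i j L : nat) : Prop :=
  i < j <= hst /\ exists q, detour i j q /\ L = i + size q + (hst - j).

(* m is the minimum of the set S of naturals (None = infinity = empty set) *)
Definition omin (S : nat -> Prop) (m : option nat) : Prop :=
  match m with
  | None => forall L, ~ S L
  | Some a => S a /\ forall L, S L -> a <= L
  end.

Definition X_eq (i j : nat) (m : option nat) : Prop := omin (Xval i j) m.
Definition X_ge (i j : nat) (m : option nat) : Prop :=
  omin (fun L => exists j', j <= j' /\ Xval i j' L) m.
Definition X_le_ge (i j : nat) (m : option nat) : Prop :=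
  omin (fun L => exists i' j', [/\ i' <= i, j <= j' & Xval i' j' L]) m.

End Paths.

Record local_info := LocalInfo {
  li_n : nat;
  li_zeta : nat;
  li_id : nat;
  li_outnb : nat -> bool;
  li_innb : nat -> bool;
  li_pidx : option nat;           (* Some i iff the vertex is v_i on P *)
  li_input : nat -> option nat    (* local input (for v_i: j |-> X[i,>=j]) *)
}.

(* A deterministic CONGEST algorithm (unlimited local computation):        *)
(* local state, initialisation, message to the neighbour with a given id,  *)
(* state update from the received messages (indexed by sender id), output. *)
Record congest_alg := CongestAlg {
  alg_state : Type;
  alg_init : local_info -> alg_state;
  alg_send : alg_state -> nat -> seq bool;
  alg_recv : alg_state -> (nat -> option (seq bool)) -> alg_state;
  alg_out : alg_state -> option nat
}.

Arguments alg_init : clear implicits.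
Arguments alg_send : clear implicits.
Arguments alg_recv : clear implicits.
Arguments alg_out : clear implicits.

Section Execution.
Variables (n : nat) (G : rel 'I_n) (id : 'I_n -> nat) (s : 'I_n)
  (ps : seq 'I_n) (zeta : nat) (inp : 'I_n -> nat -> option nat).

(* communication links: the underlying undirected graph (no self-loops) *)
Definition nb (u v : 'I_n) : bool := (u != v) && (G u v || G v u).

Definition pidx (v : 'I_n) : option nat :=
  if v \in s :: ps then Some (index v (s :: ps)) else None.

Definition linfo (v : 'I_n) : local_info :=
  LocalInfo n zeta (id v)
    (fun x => [exists u, [&& u != v, G v u & id u == x]])
    (fun x => [exists u, [&& u != v, G u v & id u == x]])
    (pidx v) (inp v).

Fixpoint run (A : congest_alg) (t : nat) : 'I_n -> alg_state A :=
  match t with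
  | 0 => fun v => alg_init A (linfo v)
  | t'.+1 =>
      let st := run A t' in
      fun v => alg_recv A (st v)
        (fun x => if [pick u | nb u v && (id u == x)] is Some u
                  then Some (alg_send A (st u) (id v)) else None)
  end.

Definition bandwidth_ok (A : congest_alg) (c T : nat) : Prop :=
  forall t u v, t < T -> nb u v ->
    size (alg_send A (run A t u) (id v)) <= c * (trunc_log 2 n).+1.

End Execution.

From mathcomp Require Import all_boot zify.
From Stdlib Require Import ClassicalEpsilon.
Set Implicit Arguments. Unset Strict Implicit. Unset Printing Implicit Defensive.

(* Since P is a shortest path, a detour of at most zeta edges from v_i only
   reaches vertices v_j with j <= i + zeta; hence X[<= i, >= j] = X[i, >= j]
   for j >= i + zeta, while X[<= i, >= j] = min (X[i, >= j], X[<= i-1, >= j])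
   in general.  A pipeline along P evaluates this recurrence: in round t the
   vertex v_i learns X[<= i, >= i + zeta - t] from its input and from
   X[<= i-1, >= i + zeta - t], which v_{i-1} learnt in round t - 1.  After
   zeta - 1 rounds v_i knows X[<= i, >= i + 1].  Shortening a detour to a
   simple path shows that every finite value is below h_st + n, so a message
   (a path index and a value) fits in O(log n) bits. *)

Section ShortestPath.
Variables (n : nat) (G : rel 'I_n) (s : 'I_n) (ps : seq 'I_n).
Hypothesis SP : shortest_path G s ps.

Lemma vP_last_take k : k <= hst ps -> vP s ps k = last s (take k ps).
Proof.
move=> le_k; rewrite (last_nth s) size_take_min.
have -> : minn k (size ps) = k by apply/minn_idPl.
by case: k {le_k} => [|k] //=; rewrite nth_take.
Qed.

Lemma walk_vP_size_ge a b q : a <= b -> b <= hst ps ->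
  is_walk G (vP s ps a) q (vP s ps b) -> b - a <= size q.
Proof.
move=> le_ab le_b /andP[walk_q /eqP last_q].
case: SP => /andP[walk_ps _] shortest.
have le_a : a <= hst ps by apply: leq_trans le_b.
have [Ea Eb] := (vP_last_take le_a, vP_last_take le_b).
have := shortest (take a ps ++ q ++ drop b ps).
have /andP[walk_pre _] :
    path G s (take a ps) && path G (last s (take a ps)) (drop a ps).
  by rewrite -cat_path cat_take_drop.
have /andP[_ walk_suf] :
    path G s (take b ps) && path G (last s (take b ps)) (drop b ps).
  by rewrite -cat_path cat_take_drop.
rewrite /is_walk !cat_path !last_cat -Ea walk_pre /= walk_q last_q Eb walk_suf.
rewrite -last_cat cat_take_drop eqxx => /(_ isT).
rewrite !size_cat size_take_min size_drop /hst in le_a le_b *; lia.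
Qed.

Lemma uniq_P : uniq (s :: ps).
Proof.
apply/(uniqP s) => a b; rewrite !inE => lt_a lt_b E.
wlog le_ab : a b lt_a lt_b E / a <= b.
  by move=> W; case: (leqP a b) => [|/ltnW] le; [|symmetry]; apply: W.
have := @walk_vP_size_ge a b [::] le_ab lt_b; rewrite /is_walk /= /vP E eqxx.
by move=> /(_ isT); lia.
Qed.

Lemma hst_ltn : hst ps < n.
Proof.
by have := uniq_leq_size uniq_P (fun x _ => mem_enum _ x); rewrite size_enum_ord.
Qed.

Lemma pidx_vP i : i <= hst ps -> pidx s ps (vP s ps i) = Some i.
Proof. by move=> le_i; rewrite /pidx /vP mem_nth ?index_uniq //; apply: uniq_P. Qed.

Lemma pidx_SomeP u k : pidx s ps u = Some k -> k <= hst ps /\ u = vP s ps k.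
Proof.
rewrite /pidx; case: ifP => // u_P [<-].
by split; [rewrite -ltnS; move: u_P; rewrite -index_mem | rewrite /vP nth_index].
Qed.

Lemma G_vP k : k < hst ps -> G (vP s ps k) (vP s ps k.+1).
Proof. by case: SP => /andP[/(pathP s) walk_ps _] _; apply: walk_ps. Qed.

End ShortestPath.

Definition minO (a b : option nat) : option nat :=
  match a, b with
  | Some x, Some y => Some (minn x y)
  | None, o | o, None => o
  end.

Lemma omin_ext (S1 S2 : nat -> Prop) m :
  (forall L, S1 L <-> S2 L) -> omin S1 m -> omin S2 m.
Proof.
move=> E; case: m => [a|] /=; last by move=> S1_0 L /E /S1_0.
by case=> /E S2a minS1; split=> // L /E /minS1.
Qed.

Lemma omin_or (S1 S2 : nat -> Prop) m1 m2 :
  omin S1 m1 -> omin S2 m2 -> omin (fun L => S1 L \/ S2 L) (minO m1 m2).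
Proof.
case: m1 m2 => [a|] [b|] /=.
- move=> [S1a min1] [S2b min2]; split; first by case: leqP => _; [left|right].
  by move=> L [/min1|/min2]; rewrite geq_min => ->; rewrite ?orbT.
- by move=> [S1a min1] S2_0; split=> [|L [/min1|/S2_0]]; [left|..].
- by move=> S1_0 [S2b min2]; split=> [|L [/S1_0|/min2]]; [right|..].
- by move=> S1_0 S2_0 L [/S1_0|/S2_0].
Qed.

Section Detours.
Variables (n : nat) (G : rel 'I_n) (s : 'I_n) (ps : seq 'I_n) (zeta : nat).
Hypothesis SP : shortest_path G s ps.

Definition off_P : rel 'I_n := fun u v => G u v && ~~ Pedge s ps u v.

Lemma path_off_P x q : path off_P x q =
  path G x q && all (fun e => ~~ Pedge s ps e.1 e.2) (zip (x :: q) q).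
Proof.
elim: q x => [|y q IHq] x //=.
by rewrite IHq /off_P; case: (G x y); case: (Pedge s ps x y); rewrite ?andbF.
Qed.

Lemma Xval_le_zeta i j L : Xval G s ps zeta i j L -> j <= i + zeta.
Proof.
case=> /andP[lt_ij le_j] [q [/and3P[walk_q le_q _] _]].
by have := walk_vP_size_ge SP (ltnW lt_ij) le_j walk_q; lia.
Qed.

Lemma Xval_shorten i j L : Xval G s ps zeta i j L ->
  exists2 L', L' < hst ps + n & Xval G s ps zeta i j L'.
Proof.
case=> /andP[lt_ij le_j] [q [/and3P[/andP[walk_q /eqP last_q] le_q off_q] _]].
have path_q : path off_P (vP s ps i) q by rewrite path_off_P walk_q off_q.
case/shortenP: path_q last_q => q' walk_q' uniq_q' sub_q' last_q'.
have le_q' : size q' <= size q by apply: uniq_leq_size sub_q'; case/andP: uniq_q'.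
have := uniq_leq_size uniq_q' (fun x _ => mem_enum _ x); rewrite size_enum_ord /=.
move=> lt_q'; exists (i + size q' + (hst ps - j)).
  by move: (size q') lt_q' => k; lia.
split; first by rewrite lt_ij le_j.
exists q'; split=> //; move: walk_q'; rewrite path_off_P => /andP[walk_q' off_q'].
by rewrite /detour /is_walk walk_q' last_q' eqxx off_q' (leq_trans le_q' le_q).
Qed.

Lemma X_le_ge_far i j m : i + zeta <= j ->
  X_ge G s ps zeta i j m -> X_le_ge G s ps zeta i j m.
Proof.
move=> le_j; apply: omin_ext => L; split=> [[j' [le_jj' X_ij']]|].
  by exists i, j'.
case=> i' [j' [le_i' le_jj' X_ij']]; have le_j' := Xval_le_zeta X_ij'.
have E : i' = i by lia.
by exists j'; rewrite -E.
Qed.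

Lemma X_le_ge0 j m : X_ge G s ps zeta 0 j m -> X_le_ge G s ps zeta 0 j m.
Proof.
apply: omin_ext => L; split=> [[j' [le_jj' X_0j']]|]; first by exists 0, j'.
by case=> i' [j' []]; rewrite leqn0 => /eqP-> le_jj' X_0j'; exists j'.
Qed.

Lemma X_le_geS i j m1 m2 :
  X_ge G s ps zeta i.+1 j m1 -> X_le_ge G s ps zeta i j m2 ->
  X_le_ge G s ps zeta i.+1 j (minO m1 m2).
Proof.
move=> X1 X2; apply: omin_ext (omin_or X1 X2) => L; split.
  case=> [[j' [le_jj' X_ij']] | [i' [j' [le_i' le_jj' X_ij']]]].
    by exists i.+1, j'.
  by exists i', j'; split=> //; apply: leqW.
case=> i' [j' [+ le_jj' X_ij']]; rewrite leq_eqVlt ltnS => /orP[/eqP E|le_i'].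
  by left; exists j'; rewrite -E.
by right; exists i', j'.
Qed.

Lemma X_le_ge_lt i j a :
  X_le_ge G s ps zeta i j (Some a) -> a < hst ps + n.
Proof.
case=> [[i' [j' [le_i' le_jj' X_ij']]] min_a].
have [L' lt_L' X_ij'L'] := Xval_shorten X_ij'.
by apply: leq_ltn_trans lt_L'; apply: min_a; exists i', j'.
Qed.

End Detours.

Fixpoint bits (w x : nat) : seq bool :=
  if w is w'.+1 then odd x :: bits w' x./2 else [::].

Fixpoint nat_of_bits (m : seq bool) : nat :=
  if m is b :: m' then b + (nat_of_bits m').*2 else 0.

Lemma size_bits w x : size (bits w x) = w.
Proof. by elim: w x => [|w IHw] x //=; rewrite IHw. Qed.

Lemma bitsK w x : x < 2 ^ w -> nat_of_bits (bits w x) = x.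
Proof.
elim: w x => [|w IHw] x /=; first by rewrite expn0 ltnS leqn0 => /eqP.
move=> lt_x; rewrite IHw ?odd_double_half //.
by move: lt_x; rewrite expnS -{1}(odd_double_half x) -mul2n; lia.
Qed.

Definition ocode (o : option nat) : nat := if o is Some a then a.+1 else 0.
Definition odecode (k : nat) : option nat := if k is k'.+1 then Some k' else None.

Definition msg (w k : nat) (o : option nat) : seq bool :=
  bits w k ++ bits w.+1 (ocode o).
Definition tag (w : nat) (m : seq bool) : nat := nat_of_bits (take w m).
Definition payload (w : nat) (m : seq bool) : option nat :=
  odecode (nat_of_bits (drop w m)).

Lemma size_msg w k o : size (msg w k o) = w.*2.+1.
Proof. by rewrite size_cat !size_bits addnS addnn. Qed.

Lemma tag_msg w k o : k < 2 ^ w -> tag w (msg w k o) = k.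
Proof. by move=> lt_k; rewrite /tag -{1}(size_bits w k) take_size_cat // bitsK. Qed.

Lemma payload_msg w k o : ocode o < 2 ^ w.+1 -> payload w (msg w k o) = o.
Proof.
move=> lt_o; rewrite /payload -{1}(size_bits w k) drop_size_cat // bitsK //.
by case: o lt_o.
Qed.

Definition width (n : nat) : nat := (trunc_log 2 n).+1.

Lemma ltn_exp_width n : n < 2 ^ width n.
Proof. exact: trunc_log_ltn. Qed.

Record pipe_state := PipeState {
  st_info : local_info;
  st_round : nat;
  st_table : nat -> option nat
}.

Definition pipe_init (li : local_info) : pipe_state :=
  PipeState li 0 (li_input li).

(* A message is tagged with the path index k + 1 of its intended receiver;
   tags are positive, so they never clash with the empty message (tag 0). *)
Definition pipe_send (x : pipe_state) (_ : nat) : seq bool :=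
  let li := st_info x in
  if li_pidx li is Some k then
    if (st_round x).+1 < li_zeta li
    then msg (width (li_n li)) k.+1 (st_table x (k + li_zeta li - st_round x))
    else [::]
  else [::].

(* v_i does not know the identifier of v_{i-1}, hence the choice among the
   received messages. *)
Definition recv_tagged (w : nat) (msgs : nat -> option (seq bool)) (i : nat) :=
  epsilon (inhabits None)
    (fun o => exists x m, [/\ msgs x = Some m, tag w m = i & o = payload w m]).

Definition pipe_recv (x : pipe_state) (msgs : nat -> option (seq bool)) :=
  let li := st_info x in
  let t := (st_round x).+1 in
  PipeState li t (fun j =>
    if li_pidx li is Some i then
      if (t < li_zeta li) && (j == i + li_zeta li - t) then
        minO (li_input li j)
             (if i is 0 then None else recv_tagged (width (li_n li)) msgs i)
      else st_table x j
    else st_table x j).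

Definition pipe_out (x : pipe_state) : option nat :=
  if li_pidx (st_info x) is Some i then st_table x i.+1 else None.

Definition pipeline : congest_alg :=
  CongestAlg pipe_init pipe_send pipe_recv pipe_out.

Lemma recv_tagged_eq w msgs i o :
  (exists x m, [/\ msgs x = Some m, tag w m = i & o = payload w m]) ->
  (forall x m, msgs x = Some m -> tag w m = i -> payload w m = o) ->
  recv_tagged w msgs i = o.
Proof.
move=> sent_o tagged_o; rewrite /recv_tagged.
set P := fun o => _.
have /(epsilon_spec (inhabits None)) : exists o, P o by exists o.
by case=> x [m [msg_x tag_m ->]]; apply: tagged_o msg_x tag_m.
Qed.

Section Pipeline.
Variables (n : nat) (G : rel 'I_n) (id : 'I_n -> nat) (s : 'I_n)
  (ps : seq 'I_n) (zeta : nat) (inp : 'I_n -> nat -> option nat).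

Local Notation R := (run G id s ps zeta inp pipeline).
Local Notation w := (width n).

Definition inbox (t : nat) (v : 'I_n) : nat -> option (seq bool) :=
  fun x => if [pick u | nb G u v && (id u == x)] is Some u
           then Some (pipe_send (R t u) (id v)) else None.

Lemma run_info t v : st_info (R t v) = linfo G id s ps zeta inp v.
Proof. by elim: t. Qed.

Lemma run_round t v : st_round (R t v) = t.
Proof. by elim: t => //= t ->. Qed.

Lemma pipe_send_run t u y : pipe_send (R t u) y =
  if pidx s ps u is Some k then
    if t.+1 < zeta then msg w k.+1 (st_table (R t u) (k + zeta - t)) else [::]
  else [::].
Proof. by rewrite /pipe_send run_info run_round. Qed.

Lemma size_pipe_send t u y : size (pipe_send (R t u) y) <= 3 * w.
Proof.
rewrite pipe_send_run; case: (pidx s ps u) => [k|] //; case: ifP => // _.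
by rewrite size_msg /width; lia.
Qed.

Lemma table_run_succ t v j : st_table (R t.+1 v) j =
  if pidx s ps v is Some i then
    if (t.+1 < zeta) && (j == i + zeta - t.+1) then
      minO (inp v j) (if i is 0 then None else recv_tagged w (inbox t v) i)
    else st_table (R t v) j
  else st_table (R t v) j.
Proof. by rewrite /= /pipe_recv run_info run_round. Qed.

Hypotheses (id_inj : injective id) (SP : shortest_path G s ps).

Lemma inbox_pred t i : i < hst ps ->
  inbox t (vP s ps i.+1) (id (vP s ps i)) =
  Some (pipe_send (R t (vP s ps i)) (id (vP s ps i.+1))).
Proof.
move=> lt_i; rewrite /inbox; case: pickP => [u /andP[_ /eqP/id_inj->] // | no_u].
have := no_u (vP s ps i); rewrite eqxx andbT /nb (G_vP SP) // andbT.
move/negbT/negPn/eqP/(congr1 (pidx s ps)).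
rewrite (pidx_vP SP lt_i) (pidx_vP SP (ltnW lt_i)).
by case; lia.
Qed.

Lemma inbox_tagged t v x m k : t.+1 < zeta ->
  inbox t v x = Some m -> tag w m = k.+1 ->
  m = msg w k.+1 (st_table (R t (vP s ps k)) (k + zeta - t)).
Proof.
move=> lt_t; rewrite /inbox; case: pickP => // u _ [<-].
rewrite pipe_send_run lt_t; case pidx_u: (pidx s ps u) => [k'|]; last by case: w.
have [le_k' ->] := pidx_SomeP pidx_u.
have fits_tag : k'.+1 < 2 ^ w.
  by apply: leq_ltn_trans (ltn_exp_width n); have := hst_ltn SP; lia.
by rewrite tag_msg // => -[<-].
Qed.

Lemma recv_pred t i : t.+1 < zeta -> i < hst ps ->
  ocode (st_table (R t (vP s ps i)) (i + zeta - t)) < 2 ^ w.+1 ->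
  recv_tagged w (inbox t (vP s ps i.+1)) i.+1 =
  st_table (R t (vP s ps i)) (i + zeta - t).
Proof.
move=> lt_t lt_i fits; apply: recv_tagged_eq => [|x m in_x tag_m].
  exists (id (vP s ps i)), (pipe_send (R t (vP s ps i)) (id (vP s ps i.+1))).
  have fits_tag : i.+1 < 2 ^ w.
    by apply: leq_ltn_trans (ltn_exp_width n); have := hst_ltn SP; lia.
  rewrite inbox_pred // pipe_send_run (pidx_vP SP (ltnW lt_i)) lt_t.
  by rewrite tag_msg // payload_msg.
by rewrite (inbox_tagged lt_t in_x tag_m) payload_msg.
Qed.

Hypothesis inp_X_ge : forall i j, i <= hst ps -> i < j ->
  X_ge G s ps zeta i j (inp (vP s ps i) j).

Lemma run_table t i j : i <= hst ps -> i + zeta - t <= j -> i < j ->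
  X_le_ge G s ps zeta i j (st_table (R t (vP s ps i)) j).
Proof.
elim: t i j => [|t IHt] i j le_i le_j lt_ij.
  by rewrite subn0 in le_j; have := X_le_ge_far SP le_j (inp_X_ge le_i lt_ij).
rewrite table_run_succ (pidx_vP SP le_i).
case: ifP => [/andP[lt_t /eqP Ej] | /negbT]; last first.
  by rewrite negb_and -leqNgt => /orP[|/eqP] ?; apply: IHt; lia.
case: i le_i le_j lt_ij Ej => [|i] le_i le_j lt_ij Ej.
  by case: (inp _ j) (X_le_ge0 (inp_X_ge le_i lt_ij)).
have Ej' : j = i + zeta - t by lia.
have IHi := IHt i j (ltnW le_i) ltac:(lia) ltac:(lia).
rewrite recv_pred -?Ej' //; first exact: X_le_geS (inp_X_ge le_i lt_ij) IHi.
case: (st_table _ _) IHi => [a /X_le_ge_lt lt_a | _] /=; last by rewrite expn_gt0.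
by rewrite expnS; have := hst_ltn SP; have := ltn_exp_width n; lia.
Qed.

End Pipeline.

Theorem lemma4p4 :
  exists (c : nat) (A : congest_alg),
    forall (n : nat) (G : rel 'I_n) (id : 'I_n -> nat) (s : 'I_n)
           (ps : seq 'I_n) (zeta : nat) (inp : 'I_n -> nat -> option nat),
      injective id ->
      0 < zeta ->
      shortest_path G s ps ->
      (forall i j, i <= hst ps -> i < j ->
         X_ge G s ps zeta i j (inp (vP s ps i) j)) ->
      bandwidth_ok G id s ps zeta inp A c (c * zeta) /\
      (forall i, i <= hst ps ->
         X_le_ge G s ps zeta i i.+1
           (alg_out A (run G id s ps zeta inp A (c * zeta) (vP s ps i)))).
Proof.
(* c = 3: messages have 2 w + 1 <= 3 w bits, and zeta - 1 rounds suffice. *)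
exists 3, pipeline => n G id s ps zeta inp id_inj _ SP inp_X_ge; split.
  by move=> t u v _ _; apply: size_pipe_send.
move=> i le_i; rewrite /= /pipe_out run_info /= (pidx_vP SP le_i).
by apply: run_table => //; lia.
Qed.
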